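(* Let $\Theta$ be a causal theory over $\mathfrak L$. The map $\Sigma\mapsto\Sigma\cap\mathfrak L$ is a bijection from the set of maximal $\vdash_\Box$-consistent subsets $\Sigma$ of $\mathcal L_\Box$ onto the set of maximal classically consistent subsets of $\mathfrak L$ (i.e. onto $\mathfrak M$).
   Context: $\mathfrak L$ is a classical propositional language; $\mathfrak M$ is the set of its models, identified with the maximal classically consistent subsets of $\mathfrak L$. A causal rule is $\phi\triangleright\psi$ with $\phi,\psi\in\mathfrak L$; a causal theory $\Theta$ is a set of causal rules. $\mathcal L_\Box$ is generated by $\mathfrak L$ and a unary $\Box$. A set $\Sigma\subseteq\mathcal L_\Box$ is $\vdash_\Box$-consistent if the sequent $\Sigma\vdash_\Box$ (empty right side) is not derivable in $\mathbf S_\Theta$, and maximal if it has no proper $\vdash_\Box$-consistent superset. The sequent calculus $\mathbf S_\Theta$ derives sequents $\Gamma\vdash_\Box\Delta$ (collections possibly infinite; derivations well-founded, possibly infinitely branching) via: axiom $p\vdash_\Box p$; $\perp\vdash_\Box$; $\vdash_\Box\top$; weakening and contraction; classical two-sided LK rules for $\neg,\wedge,\vee,\to$ with shared contexts; $\Box$R: if $\phi_1\triangleright\psi_1,\dots,\phi_k\triangleright\psi_k\in\Theta$ and $\psi_1,\dots,\psi_k\vdash_\Box p$ is derivable, from $\Gamma\vdash_\Box\phi_1\wedge\dots\wedge\phi_k,\Delta$ infer $\Gamma\vdash_\Box\Box p,\Delta$; $\Box$L: letting $\{S_j\}_{j\in J}$ be all finite $S_j\subseteq\Theta$ with $\{\psi:\phi\triangleright\psi\in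 S_j\}\vdash_\Box p$ derivable, from $\Gamma,\{\phi:\phi\triangleright\psi\in S_j\}\vdash_\Box\Delta$ for all $j\in J$ infer $\Gamma,\Box p\vdash_\Box\Delta$; multicut: from $\Gamma\vdash_\Box p^m,\Delta$ and $\Gamma',p^n\vdash_\Box\Delta'$ ($m,n>0$) infer $\Gamma,\Gamma'\vdash_\Box\Delta,\Delta'$. *)

From Stdlib Require Import List.
Import ListNotations.

Set Implicit Arguments.

Inductive form (At : Type) : Type :=
| Var : At -> form At
| Bot : form At
| Top : form At
| Neg : form At -> form At
| And : form At -> form At -> form At
| Or  : form At -> form At -> form At
| Imp : form At -> form At -> form At.
Arguments Bot {At}. Arguments Top {At}.

Inductive mform (At : Type) : Type :=
| MVar : At -> mform At
| MBot : mform At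
| MTop : mform At
| MNeg : mform At -> mform At
| MAnd : mform At -> mform At -> mform At
| MOr  : mform At -> mform At -> mform At
| MImp : mform At -> mform At -> mform At
| MBox : mform At -> mform At.
Arguments MBot {At}. Arguments MTop {At}.

Fixpoint emb {At : Type} (f : form At) : mform At :=
  match f with
  | Var a => MVar a
  | Bot => MBot
  | Top => MTop
  | Neg a => MNeg (emb a)
  | And a b => MAnd (emb a) (emb b)
  | Or a b => MOr (emb a) (emb b)
  | Imp a b => MImp (emb a) (emb b)
  end.

(* A causal rule phi ▷ psi is the pair (phi, psi); a causal theory is a set of rules. *)
Definition causal_rule (At : Type) : Type := (form At * form At)%type.
Definition causal_theory (At : Type) : Type := causal_rule At -> Prop.

Definition sempty {T : Type} : T -> Prop := fun _ => False.
Definition ssing {T : Type} (x : T) : T -> Prop := fun y => y = x.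
Definition sunion {T : Type} (X Y : T -> Prop) : T -> Prop := fun y => X y \/ Y y.
Definition ssub {T : Type} (X Y : T -> Prop) : Prop := forall y, X y -> Y y.
Definition slist {T : Type} (l : list T) : T -> Prop := fun y => In y l.
Definition sadd {T : Type} (X : T -> Prop) (x : T) : T -> Prop := sunion X (ssing x).

Fixpoint bigconj {At : Type} (l : list (form At)) : form At :=
  match l with
  | [] => Top
  | [x] => x
  | x :: xs => And x (bigconj xs)
  end.

Definition in_theory {At : Type} (Th : causal_theory At) (S : list (causal_rule At)) : Prop :=
  forall r, In r S -> Th r.

(* The calculus S_Theta, parametrised by the relation E that interprets the
   side conditions "psi_1, ..., psi_k |-_Box p" of the Box rules.  S_Theta itself is
   obtained when E is derivability in the calculus itself (see [is_S_Theta]). *)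
Inductive derivS {At : Type} (Th : causal_theory At)
  (E : list (form At) -> mform At -> Prop) :
  (mform At -> Prop) -> (mform At -> Prop) -> Prop :=
| dS_ax : forall p, derivS Th E (ssing p) (ssing p)
| dS_bot : derivS Th E (ssing MBot) sempty
| dS_top : derivS Th E sempty (ssing MTop)
| dS_weak : forall G D G' D', derivS Th E G D -> ssub G G' -> ssub D D' -> derivS Th E G' D'
| dS_negL : forall G D a, derivS Th E G (sadd D a) -> derivS Th E (sadd G (MNeg a)) D
| dS_negR : forall G D a, derivS Th E (sadd G a) D -> derivS Th E G (sadd D (MNeg a))
| dS_andL : forall G D a b, derivS Th E (sadd (sadd G a) b) D -> derivS Th E (sadd G (MAnd a b)) D
| dS_andR : forall G D a b, derivS Th E G (sadd D a) -> derivS Th E G (sadd D b) ->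
    derivS Th E G (sadd D (MAnd a b))
| dS_orL : forall G D a b, derivS Th E (sadd G a) D -> derivS Th E (sadd G b) D ->
    derivS Th E (sadd G (MOr a b)) D
| dS_orR : forall G D a b, derivS Th E G (sadd (sadd D a) b) -> derivS Th E G (sadd D (MOr a b))
| dS_impL : forall G D a b, derivS Th E G (sadd D a) -> derivS Th E (sadd G b) D ->
    derivS Th E (sadd G (MImp a b)) D
| dS_impR : forall G D a b, derivS Th E (sadd G a) (sadd D b) -> derivS Th E G (sadd D (MImp a b))
| dS_boxR : forall G D p (S : list (causal_rule At)),
    in_theory Th S -> E (map snd S) p ->
    derivS Th E G (sadd D (emb (bigconj (map fst S)))) ->
    derivS Th E G (sadd D (MBox p))
| dS_boxL : forall G D p,
    (forall S : list (causal_rule At), in_theory Th S -> E (map snd S) p ->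
       derivS Th E (sunion G (slist (map (fun r => emb (fst r)) S))) D) ->
    derivS Th E (sadd G (MBox p)) D
| dS_cut : forall G D G' D' p,
    derivS Th E G (sadd D p) -> derivS Th E (sadd G' p) D' ->
    derivS Th E (sunion G G') (sunion D D').

Definition is_S_Theta {At : Type} (Th : causal_theory At)
  (E : list (form At) -> mform At -> Prop) : Prop :=
  forall (psis : list (form At)) (p : mform At),
    E psis p <-> derivS Th E (slist (map emb psis)) (ssing p).

Definition box_consistent {At : Type} Th E (Sg : mform At -> Prop) : Prop :=
  ~ derivS Th E Sg sempty.

Definition box_maximal {At : Type} Th E (Sg : mform At -> Prop) : Prop :=
  box_consistent Th E Sg /\
  forall Sg' : mform At -> Prop, ssub Sg Sg' -> box_consistent Th E Sg' -> ssub Sg' Sg.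

Inductive cderiv {At : Type} : (form At -> Prop) -> (form At -> Prop) -> Prop :=
| c_ax : forall p, cderiv (ssing p) (ssing p)
| c_bot : cderiv (ssing Bot) sempty
| c_top : cderiv sempty (ssing Top)
| c_weak : forall G D G' D', cderiv G D -> ssub G G' -> ssub D D' -> cderiv G' D'
| c_negL : forall G D a, cderiv G (sadd D a) -> cderiv (sadd G (Neg a)) D
| c_negR : forall G D a, cderiv (sadd G a) D -> cderiv G (sadd D (Neg a))
| c_andL : forall G D a b, cderiv (sadd (sadd G a) b) D -> cderiv (sadd G (And a b)) D
| c_andR : forall G D a b, cderiv G (sadd D a) -> cderiv G (sadd D b) -> cderiv G (sadd D (And a b))
| c_orL : forall G D a b, cderiv (sadd G a) D -> cderiv (sadd G b) D -> cderiv (sadd G (Or a b)) D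
| c_orR : forall G D a b, cderiv G (sadd (sadd D a) b) -> cderiv G (sadd D (Or a b))
| c_impL : forall G D a b, cderiv G (sadd D a) -> cderiv (sadd G b) D -> cderiv (sadd G (Imp a b)) D
| c_impR : forall G D a b, cderiv (sadd G a) (sadd D b) -> cderiv G (sadd D (Imp a b))
| c_cut : forall G D G' D' p, cderiv G (sadd D p) -> cderiv (sadd G' p) D' ->
    cderiv (sunion G G') (sunion D D').

Definition classically_consistent {At : Type} (X : form At -> Prop) : Prop :=
  ~ cderiv X sempty.

Definition is_model {At : Type} (X : form At -> Prop) : Prop :=
  classically_consistent X /\
  forall X' : form At -> Prop, ssub X X' -> classically_consistent X' -> ssub X' X.

Definition restrictL {At : Type} (Sg : mform At -> Prop) : form At -> Prop :=
  fun f => Sg (emb f).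

(* Both LK on L and S_Theta on L_Box are two-sided calculi with the classical
   rules for the Boolean connectives, weakening and cut.  For any such calculus a
   maximal consistent set is closed under derivability and behaves like a
   valuation: it contains Bot never, Top always, ~a iff not a, a /\ b iff both,
   etc.  Conversely a consistent set containing a or ~a for every a is maximal.

   The bijection then follows from three results:
   - LK derivations embed into S_Theta, so Sigma ∩ L is a model (well-defined).
   - For m in M let [sat m] be the subset of L_Box read off from m on L and
     interpreting Box p as "p follows (in the sense of E) from the heads of
     finitely many rules of Theta whose bodies hold in m".  S_Theta is sound
     for [sat m], so [sat m] is maximal, and it extends m (surjective).
   - Every maximal Sigma coincides with [sat (Sigma ∩ L)], by induction on
     formulas using the closure properties above and the Box rules (injective).
   Nothing about E is used: the statement holds for every interpretation of
   the side conditions of the Box rules, in particular for S_Theta itself. *)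

From Stdlib Require Import List Classical.
Import ListNotations.
Set Implicit Arguments. Unset Strict Implicit.

Ltac sets := unfold ssub, sadd, sunion, ssing, sempty, slist in *; intros;
  repeat match goal with H : exists _, _ |- _ => destruct H end;
  firstorder (subst; eauto).

Record calculus (F : Type) := Calculus {
  der : (F -> Prop) -> (F -> Prop) -> Prop;
  fbot : F; ftop : F; fneg : F -> F; fand : F -> F -> F; forr : F -> F -> F; fimp : F -> F -> F;
  rule_ax : forall p, der (ssing p) (ssing p);
  rule_bot : der (ssing fbot) sempty;
  rule_top : der sempty (ssing ftop);
  rule_weak : forall G D G' D', der G D -> ssub G G' -> ssub D D' -> der G' D';
  rule_negL : forall G D a, der G (sadd D a) -> der (sadd G (fneg a)) D;
  rule_negR : forall G D a, der (sadd G a) D -> der G (sadd D (fneg a));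
  rule_andL : forall G D a b, der (sadd (sadd G a) b) D -> der (sadd G (fand a b)) D;
  rule_andR : forall G D a b, der G (sadd D a) -> der G (sadd D b) -> der G (sadd D (fand a b));
  rule_orL : forall G D a b, der (sadd G a) D -> der (sadd G b) D -> der (sadd G (forr a b)) D;
  rule_orR : forall G D a b, der G (sadd (sadd D a) b) -> der G (sadd D (forr a b));
  rule_impL : forall G D a b, der G (sadd D a) -> der (sadd G b) D -> der (sadd G (fimp a b)) D;
  rule_impR : forall G D a b, der (sadd G a) (sadd D b) -> der G (sadd D (fimp a b));
  rule_cut : forall G D G' D' p,
    der G (sadd D p) -> der (sadd G' p) D' -> der (sunion G G') (sunion D D')
}.

Definition maximal_consistent (F : Type) (C : calculus F) (X : F -> Prop) : Prop :=
  ~ der C X sempty /\ (forall X', ssub X X' -> ~ der C X' sempty -> ssub X' X).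

Section Calculus.
Variables (F : Type) (C : calculus F).

Lemma rule_id (G D : F -> Prop) p : G p -> D p -> der C G D.
Proof. intros Gp Dp. eapply rule_weak; [apply (rule_ax C p)|sets|sets]. Qed.

Lemma contradictory_inconsistent (X : F -> Prop) a :
  X a -> X (fneg C a) -> der C X sempty.
Proof.
  intros Ha Hna.
  eapply rule_weak; [apply (rule_negL (G := ssing a) (D := sempty) (a := a))|sets|sets].
  apply (rule_id (p := a)); sets.
Qed.

Lemma deciding_maximal (X : F -> Prop) :
  ~ der C X sempty -> (forall a, X a \/ X (fneg C a)) -> maximal_consistent C X.
Proof.
  intros Hcons Hdec. split; [exact Hcons|].
  intros X' Hsub Hcons' a Ha. destruct (Hdec a) as [Hx|Hn]; [exact Hx|].
  exfalso. exact (Hcons' (contradictory_inconsistent Ha (Hsub _ Hn))).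
Qed.

Section MaximalConsistent.
Variables (X : F -> Prop) (HX : maximal_consistent C X).

Lemma max_no_refutation G : der C G sempty -> ssub G X -> False.
Proof. intros D S. apply (proj1 HX). eapply rule_weak; eauto. sets. Qed.

Lemma max_closed G f : der C G (ssing f) -> ssub G X -> X f.
Proof.
  intros D S.
  assert (D1 : der C X (sadd sempty f)) by (eapply rule_weak; eauto; sets).
  assert (Hc : ~ der C (sadd X f) sempty).
  { intro D2. apply (proj1 HX). eapply rule_weak; [eapply rule_cut; [exact D1|exact D2]|sets|sets]. }
  apply (proj2 HX _ (fun y Hy => or_introl Hy) Hc). sets.
Qed.

Lemma max_outside f : ~ X f -> der C (sadd X f) sempty.
Proof.
  intros N. apply NNPP. intro Hc. apply N.
  apply (proj2 HX _ (fun y Hy => or_introl Hy) Hc). sets.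
Qed.

Lemma max_bot : ~ X (fbot C).
Proof. intro B. eapply max_no_refutation; [apply rule_bot|sets]. Qed.

Lemma max_top : X (ftop C).
Proof. eapply max_closed; [apply rule_top|sets]. Qed.

Lemma max_neg a : X (fneg C a) <-> ~ X a.
Proof.
  split.
  - intros N A. exact (proj1 HX (contradictory_inconsistent A N)).
  - intros N. apply (max_closed (G := X)); [|sets].
    eapply rule_weak; [apply rule_negR; apply (max_outside N)|sets|sets].
Qed.

Lemma max_and a b : X (fand C a b) <-> X a /\ X b.
Proof.
  split.
  - intros A; split; apply (max_closed (G := sadd sempty (fand C a b))); try sets;
      apply rule_andL; [apply (rule_id (p := a)) | apply (rule_id (p := b))]; sets.
  - intros [A B]. apply (max_closed (G := sunion (ssing a) (ssing b))); [|sets].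
    eapply rule_weak; [apply (rule_andR (G := sunion (ssing a) (ssing b)) (D := sempty))|sets|sets].
    + apply (rule_id (p := a)); sets.
    + apply (rule_id (p := b)); sets.
Qed.

Lemma max_or a b : X (forr C a b) <-> X a \/ X b.
Proof.
  split.
  - intros A. apply NNPP; intro N.
    apply (max_no_refutation (G := sadd X (forr C a b))); [|sets].
    apply rule_orL; apply max_outside; tauto.
  - intros Hab. apply (max_closed (G := X)); [|sets].
    eapply rule_weak; [apply (rule_orR (G := X) (D := sempty))|sets|sets].
    destruct Hab; [apply (rule_id (p := a)) | apply (rule_id (p := b))]; sets.
Qed.

Lemma max_imp a b : X (fimp C a b) <-> (X a -> X b).
Proof.
  split.
  - intros I A. apply (max_closed (G := sadd (ssing a) (fimp C a b))); [|sets].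
    apply (rule_impL (G := ssing a) (D := ssing b));
      [apply (rule_id (p := a)) | apply (rule_id (p := b))]; sets.
  - intros I. apply (max_closed (G := X)); [|sets].
    eapply rule_weak; [apply (rule_impR (G := X) (D := sempty))|sets|sets].
    destruct (classic (X a)) as [A|A].
    + apply (rule_id (p := b)); sets.
    + eapply rule_weak; [apply (max_outside A)|sets|sets].
Qed.

End MaximalConsistent.
End Calculus.

Definition LK (At : Type) : calculus (form At) :=
  @Calculus _ (@cderiv At) Bot Top (@Neg At) (@And At) (@Or At) (@Imp At)
    (@c_ax At) (@c_bot At) (@c_top At) (@c_weak At) (@c_negL At) (@c_negR At)
    (@c_andL At) (@c_andR At) (@c_orL At) (@c_orR At) (@c_impL At) (@c_impR At) (@c_cut At).

Definition S_calculus (At : Type) Th E : calculus (mform At) :=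
  @Calculus _ (@derivS At Th E) MBot MTop (@MNeg At) (@MAnd At) (@MOr At) (@MImp At)
    (@dS_ax At Th E) (@dS_bot At Th E) (@dS_top At Th E) (@dS_weak At Th E)
    (@dS_negL At Th E) (@dS_negR At Th E)
    (@dS_andL At Th E) (@dS_andR At Th E) (@dS_orL At Th E) (@dS_orR At Th E)
    (@dS_impL At Th E) (@dS_impR At Th E) (@dS_cut At Th E).

Section CausalTheory.
Variables (At : Type) (Th : causal_theory At) (E : list (form At) -> mform At -> Prop).

Definition embset (X : form At -> Prop) : mform At -> Prop :=
  fun x => exists f, X f /\ emb f = x.

Ltac embsets := unfold embset in *; sets.
Ltac weaken_from H := eapply dS_weak; [exact H|embsets|embsets].

Lemma LK_in_S (G D : form At -> Prop) : cderiv G D -> derivS Th E (embset G) (embset D).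
Proof.
  induction 1.
  - apply (rule_id (S_calculus Th E) (p := emb p)); embsets.
  - eapply dS_weak; [apply dS_bot|embsets|embsets].
  - eapply dS_weak; [apply dS_top|embsets|embsets].
  - weaken_from IHcderiv.
  - eapply dS_weak; [apply (dS_negL (G := embset G) (D := embset D) (a := emb a))|embsets|embsets].
    weaken_from IHcderiv.
  - eapply dS_weak; [apply (dS_negR (G := embset G) (D := embset D) (a := emb a))|embsets|embsets].
    weaken_from IHcderiv.
  - eapply dS_weak; [apply (dS_andL (G := embset G) (D := embset D) (a := emb a) (b := emb b))|embsets|embsets].
    weaken_from IHcderiv.
  - eapply dS_weak; [apply (dS_andR (G := embset G) (D := embset D) (a := emb a) (b := emb b))|embsets|embsets];
    [weaken_from IHcderiv1 | weaken_from IHcderiv2].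
  - eapply dS_weak; [apply (dS_orL (G := embset G) (D := embset D) (a := emb a) (b := emb b))|embsets|embsets];
    [weaken_from IHcderiv1 | weaken_from IHcderiv2].
  - eapply dS_weak; [apply (dS_orR (G := embset G) (D := embset D) (a := emb a) (b := emb b))|embsets|embsets].
    weaken_from IHcderiv.
  - eapply dS_weak; [apply (dS_impL (G := embset G) (D := embset D) (a := emb a) (b := emb b))|embsets|embsets];
    [weaken_from IHcderiv1 | weaken_from IHcderiv2].
  - eapply dS_weak; [apply (dS_impR (G := embset G) (D := embset D) (a := emb a) (b := emb b))|embsets|embsets].
    weaken_from IHcderiv.
  - eapply dS_weak; [apply (dS_cut (G := embset G) (D := embset D) (G' := embset G') (D' := embset D') (p := emb p))|embsets|embsets];
    [weaken_from IHcderiv1 | weaken_from IHcderiv2].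
Qed.

(* Sigma ∩ L is a model: it is LK-consistent because LK embeds into S_Theta,
   and it decides every formula because Sigma does. *)
Lemma restriction_is_model (Sg : mform At -> Prop) :
  box_maximal Th E Sg -> is_model (restrictL Sg).
Proof.
  intros HSg. apply (deciding_maximal (C := LK At)).
  - intro D. apply (proj1 HSg).
    eapply dS_weak; [apply (LK_in_S D)|unfold restrictL; embsets|embsets].
  - intro f. unfold restrictL. destruct (classic (Sg (emb f))) as [Hf|Hf]; [left; exact Hf|right].
    exact (proj2 (max_neg (C := S_calculus Th E) HSg (emb f)) Hf).
Qed.

Fixpoint sat (m : form At -> Prop) (x : mform At) : Prop :=
  match x with
  | MVar a => m (Var a)
  | MBot => False
  | MTop => True
  | MNeg a => ~ sat m a
  | MAnd a b => sat m a /\ sat m b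
  | MOr a b => sat m a \/ sat m b
  | MImp a b => sat m a -> sat m b
  | MBox p => exists S, in_theory Th S /\ E (map snd S) p /\ m (bigconj (map fst S))
  end.

Lemma sat_ext (m1 m2 : form At -> Prop) : (forall f, m1 f <-> m2 f) ->
  forall x, sat m1 x <-> sat m2 x.
Proof.
  intros H; induction x; simpl; try tauto.
  - apply H.
  - split; intros [S [A [B C]]]; exists S; repeat split; auto; apply H; auto.
Qed.

Section Model.
Variables (m : form At -> Prop) (Hm : is_model m).
Let Hmax : maximal_consistent (LK At) m := Hm.

Lemma sat_emb f : sat m (emb f) <-> m f.
Proof.
  induction f; simpl.
  - tauto.
  - split; [contradiction|intro B; exact (max_bot Hmax B)].
  - split; [intros _; exact (max_top Hmax)|tauto].
  - rewrite IHf. symmetry. exact (max_neg Hmax f).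
  - rewrite IHf1, IHf2. symmetry. exact (max_and Hmax f1 f2).
  - rewrite IHf1, IHf2. symmetry. exact (max_or Hmax f1 f2).
  - rewrite IHf1, IHf2. symmetry. exact (max_imp Hmax f1 f2).
Qed.

Lemma model_bigconj l f : m (bigconj l) -> In f l -> m f.
Proof.
  revert f. induction l as [|x [|y ys] IH]; intros f B I; simpl in I.
  - contradiction.
  - destruct I as [<-|[]]. exact B.
  - apply (max_and Hmax x (bigconj (y :: ys))) in B as [B1 B2].
    destruct I as [<-|I]; auto.
Qed.

Definition refutes (G D : mform At -> Prop) : Prop :=
  (forall g, G g -> sat m g) /\ (forall d, D d -> ~ sat m d).

Ltac split_sadd_hyps :=
  repeat match goal with
  | H : forall x, @?A x \/ x = ?a -> @?P x |- _ =>
      let H1 := fresh H in let H2 := fresh H in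
      pose proof (fun x hx => H x (or_introl hx)) as H1;
      pose proof (H a (or_intror eq_refl)) as H2; clear H; cbv beta in H1, H2; simpl in H2
  | H : forall x, x = ?a -> @?P x |- _ => specialize (H a eq_refl); simpl in H
  end.

Ltac refute_premise :=
  match goal with IH : ~ (_ /\ _) |- _ =>
    apply IH; split; intros y Hy; repeat destruct Hy as [Hy|Hy]; subst; simpl;
    solve [tauto | eauto]
  end.

(* For the
   Boolean rules a refutation of the conclusion yields one of a premise; the
   Box rules use that the model agrees with its extension on L. *)
Lemma sat_sound (G D : mform At -> Prop) : derivS Th E G D -> ~ refutes G D.
Proof.
  unfold refutes. induction 1; intros [HG HD];
    unfold ssub, sadd, sunion, ssing, sempty, slist in *; split_sadd_hyps.
  all: try solve [ try destruct (classic (sat m a)); try destruct (classic (sat m b));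
    try destruct (classic (sat m p)); solve [tauto | refute_premise] ].
  - (* Box R *)
    apply IHderivS. split; [exact HG|]. intros d [Dd| ->]; [exact (HD0 d Dd)|].
    rewrite sat_emb. intro Hb. apply HD1. exists S. auto.
  - (* Box L *)
    destruct HG1 as [S [HS [HES Hb]]].
    match goal with IHprem : forall S, in_theory Th S -> _ -> ~ _ |- _ =>
      apply (IHprem S HS HES) end.
    split; [|exact HD].
    intros g [Gg|Ig]; [exact (HG0 g Gg)|].
    apply in_map_iff in Ig as [r [<- Ir]].
    apply sat_emb. apply (model_bigconj Hb). apply in_map. exact Ir.
Qed.

Lemma sat_box_maximal : box_maximal Th E (sat m).
Proof.
  apply (deciding_maximal (C := S_calculus Th E)).
  - intro D. apply (sat_sound D). split; [exact (fun g Hg => Hg)|intros d []].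
  - intro x. apply classic.
Qed.

End Model.

Lemma bigconj_derivable (l : list (form At)) :
  derivS Th E (slist (map emb l)) (ssing (emb (bigconj l))).
Proof.
  induction l as [|x [|y ys] IH].
  - eapply dS_weak; [apply dS_top|sets|sets].
  - apply (rule_id (S_calculus Th E) (p := emb x)); sets.
  - change (emb (bigconj (x :: y :: ys))) with (MAnd (emb x) (emb (bigconj (y :: ys)))).
    eapply dS_weak; [apply (dS_andR (G := slist (map emb (x :: y :: ys))) (D := sempty))|sets|sets].
    + apply (rule_id (S_calculus Th E) (p := emb x)); sets.
    + eapply dS_weak; [apply IH|simpl; sets|sets].
Qed.

Section BoxMaximal.
Variables (Sg : mform At -> Prop) (HSg : box_maximal Th E Sg).
Let Hmax : maximal_consistent (S_calculus Th E) Sg := HSg.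

(* A maximal set contains Box p exactly when it contains the bodies of finitely
   many rules whose heads yield p: one direction is Box R, the other Box L
   together with the derivability of a conjunction from its conjuncts. *)
Lemma maximal_box p :
  Sg (MBox p) <-> exists S, in_theory Th S /\ E (map snd S) p /\ Sg (emb (bigconj (map fst S))).
Proof.
  split.
  - intro B. apply NNPP; intro N.
    apply (max_no_refutation Hmax (G := sadd Sg (MBox p))); [|sets].
    apply dS_boxL. intros S HS HES.
    assert (Nb : ~ Sg (emb (bigconj (map fst S)))) by (intro Hb; apply N; exists S; auto).
    eapply dS_weak; [eapply (dS_cut (G := slist (map (fun r => emb (fst r)) S)) (D := sempty))| |].
    + eapply dS_weak; [apply (bigconj_derivable (map fst S))|rewrite map_map; sets|sets].
    + exact (max_outside Hmax Nb).
    + sets.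
    + sets.
  - intros [S [HS [HES Hb]]].
    apply (max_closed Hmax (G := Sg)); [|sets].
    eapply dS_weak; [apply (dS_boxR (G := Sg) (D := sempty) p HS HES)|sets|sets].
    apply (rule_id (S_calculus Th E) (p := emb (bigconj (map fst S)))); sets.
Qed.

Lemma maximal_is_canonical x : Sg x <-> sat (restrictL Sg) x.
Proof.
  induction x; simpl.
  - reflexivity.
  - split; [exact (max_bot Hmax)|contradiction].
  - split; [tauto|intros _; exact (max_top Hmax)].
  - rewrite <- IHx. exact (max_neg Hmax x).
  - rewrite <- IHx1, <- IHx2. exact (max_and Hmax x1 x2).
  - rewrite <- IHx1, <- IHx2. exact (max_or Hmax x1 x2).
  - rewrite <- IHx1, <- IHx2. exact (max_imp Hmax x1 x2).
  - exact (maximal_box x).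
Qed.

End BoxMaximal.

End CausalTheory.

Theorem mainTheorem14 (At : Type) (Th : causal_theory At)
  (E : list (form At) -> mform At -> Prop) (HE : is_S_Theta Th E) :
  (* well-defined: Sigma ∩ L lies in M *)
  (forall Sg : mform At -> Prop, box_maximal Th E Sg -> is_model (restrictL Sg)) /\
  (* injective *)
  (forall Sg1 Sg2 : mform At -> Prop, box_maximal Th E Sg1 -> box_maximal Th E Sg2 ->
     (forall f : form At, restrictL Sg1 f <-> restrictL Sg2 f) ->
     forall x : mform At, Sg1 x <-> Sg2 x) /\
  (* surjective onto M *)
  (forall m : form At -> Prop, is_model m ->
     exists Sg : mform At -> Prop, box_maximal Th E Sg /\
       forall f : form At, restrictL Sg f <-> m f).
Proof.
  split; [|split].
  - exact (@restriction_is_model At Th E).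
  - intros Sg1 Sg2 H1 H2 Hr x.
    rewrite (maximal_is_canonical H1 x), (maximal_is_canonical H2 x).
    exact (sat_ext Th E Hr x).
  - intros m Hm. exists (sat Th E m). split.
    + exact (sat_box_maximal Th E Hm).
    + exact (sat_emb Th E Hm).
Qed.
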